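(* Let $F$ be a field and let $A$ be a unital $F$-algebra without zero divisors which is either flexible or quadratic. Then $A$ is von-Neumann finite.
   Context: An $F$-algebra is a vector space with a bilinear, not necessarily associative, multiplication; unital means it has a two-sided identity $1$. $A$ has no zero divisors if $ab=0$ implies $a=0$ or $b=0$. $A$ is flexible if $a(ba)=(ab)a$ for all $a,b\in A$. $A$ is quadratic if it is unital and $1,a,a^2$ are linearly dependent for every $a\in A$. $A$ is von-Neumann finite if $ab=1$ implies $ba=1$ for all $a,b\in A$. *)

From mathcomp Require Import all_boot all_algebra.
Set Implicit Arguments. Unset Strict Implicit. Unset Printing Implicit Defensive.
Import GRing.Theory.
Local Open Scope ring_scope.

(* A (not necessarily associative) F-algebra: an F-vector space V with a
   bilinear multiplication [mul]. *)
Definition bilinear_mul (F : fieldType) (V : lmodType F) (mul : V -> V -> V) : Prop :=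
  (forall (k : F) (a b c : V), mul (k *: a + b) c = k *: mul a c + mul b c) /\
  (forall (k : F) (a b c : V), mul a (k *: b + c) = k *: mul a b + mul a c).

Definition is_unit_elt (F : fieldType) (V : lmodType F) (mul : V -> V -> V) (one : V) : Prop :=
  forall a : V, mul one a = a /\ mul a one = a.

Definition no_zero_divisors (F : fieldType) (V : lmodType F) (mul : V -> V -> V) : Prop :=
  forall a b : V, mul a b = 0 -> a = 0 \/ b = 0.

Definition flexible (F : fieldType) (V : lmodType F) (mul : V -> V -> V) : Prop :=
  forall a b : V, mul a (mul b a) = mul (mul a b) a.

Definition quadratic (F : fieldType) (V : lmodType F) (mul : V -> V -> V) (one : V) : Prop :=
  forall a : V, exists c0 c1 c2 : F,
    [\/ c0 != 0, c1 != 0 | c2 != 0] /\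
    c0 *: one + c1 *: a + c2 *: mul a a = 0.

Definition vN_finite (F : fieldType) (V : lmodType F) (mul : V -> V -> V) (one : V) : Prop :=
  forall a b : V, mul a b = one -> mul b a = one.

From mathcomp Require Import all_boot all_algebra.
Set Implicit Arguments. Unset Strict Implicit. Unset Printing Implicit Defensive.
Import GRing.Theory.
Local Open Scope ring_scope.

(* Since there are no zero divisors, a nonzero left factor can be cancelled.
   In the flexible case, [a (b a) = (a b) a = a = a 1] cancels to [b a = 1].
   In the quadratic case either [a] is a scalar, or [a^2 = al a + be 1]; then
   [d := a - al 1] satisfies [a d = d a = be 1], and [be != 0] (otherwise
   [a d = 0] forces [a] to be a scalar), so [b = be^-1 d] by cancelling [a]
   in [a b = 1], whence [b a = 1]. *)

Section Bilinear.
Variables (F : fieldType) (V : lmodType F) (mul : V -> V -> V).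
Hypothesis mul_bilinear : bilinear_mul mul.

Lemma bmulDl a b c : mul (a + b) c = mul a c + mul b c.
Proof. by have := mul_bilinear.1 1 a b c; rewrite !scale1r. Qed.

Lemma bmulDr a b c : mul a (b + c) = mul a b + mul a c.
Proof. by have := mul_bilinear.2 1 a b c; rewrite !scale1r. Qed.

Lemma bmul0l c : mul 0 c = 0.
Proof. by apply: (addrI (mul 0 c)); rewrite -bmulDl !addr0. Qed.

Lemma bmul0r c : mul c 0 = 0.
Proof. by apply: (addrI (mul c 0)); rewrite -bmulDr !addr0. Qed.

Lemma bmulZl k a c : mul (k *: a) c = k *: mul a c.
Proof. by have := mul_bilinear.1 k a 0 c; rewrite !addr0 bmul0l addr0. Qed.

Lemma bmulZr k a c : mul a (k *: c) = k *: mul a c.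
Proof. by have := mul_bilinear.2 k a c 0; rewrite !addr0 bmul0r addr0. Qed.

Lemma bmulBl a b c : mul (a - b) c = mul a c - mul b c.
Proof. by rewrite bmulDl -scaleN1r bmulZl scaleN1r. Qed.

Lemma bmulBr a b c : mul a (b - c) = mul a b - mul a c.
Proof. by rewrite bmulDr -scaleN1r bmulZr scaleN1r. Qed.

End Bilinear.

Section Unital.
Variables (F : fieldType) (V : lmodType F) (mul : V -> V -> V) (one : V).
Hypotheses (mul_bilinear : bilinear_mul mul) (one_unit : is_unit_elt mul one).
Hypotheses (mul_nzd : no_zero_divisors mul) (one_neq0 : one != 0).

Lemma mul1x a : mul one a = a. Proof. exact: (one_unit a).1. Qed.
Lemma mulx1 a : mul a one = a. Proof. exact: (one_unit a).2. Qed.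

Lemma nzd_lcancel a x y : a != 0 -> mul a x = mul a y -> x = y.
Proof.
move=> a_neq0 /eqP; rewrite -subr_eq0 -bmulBr // => /eqP /mul_nzd [a0|].
  by rewrite a0 eqxx in a_neq0.
by move/eqP; rewrite subr_eq0 => /eqP.
Qed.

Lemma rinv_neq0 a b : mul a b = one -> a != 0.
Proof. by move=> ab1; apply: contra_neq one_neq0 => a0; rewrite -ab1 a0 bmul0l. Qed.

Lemma scalar_rinv_comm k b : mul (k *: one) b = one -> mul b (k *: one) = one.
Proof. by rewrite bmulZl // bmulZr // mul1x mulx1. Qed.

Lemma flexible_vN_finite : flexible mul -> vN_finite mul one.
Proof.
move=> mul_flex a b ab1; apply: (nzd_lcancel (rinv_neq0 ab1)).
by rewrite mul_flex ab1 mul1x mulx1.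
Qed.

Lemma quadratic_scalar_or_deg2 a : quadratic mul one ->
  (exists k, a = k *: one) \/ exists al be, mul a a = al *: a + be *: one.
Proof.
move=> /(_ a) [c0 [c1 [c2 [c_neq0 c_rel]]]].
have [c2_0|c2_neq0] := eqVneq c2 0; last first.
  right; exists (- c1 / c2), (- c0 / c2); apply: (scalerI c2_neq0).
  have c2K x : c2 * (x / c2) = x by rewrite mulrCA divff // mulr1.
  rewrite scalerDr !scalerA !c2K !scaleNr.
  by apply/eqP; rewrite -opprD -addr_eq0 addrC [c1 *: a + _]addrC c_rel.
left; move: c_rel; rewrite c2_0 scale0r addr0.
have [c1_0|c1_neq0] := eqVneq c1 0.
  rewrite c1_0 scale0r addr0 => /eqP; rewrite scaler_eq0 (negPf one_neq0) orbF.
  by move/eqP=> c0_0; move: c_neq0; rewrite c0_0 c1_0 c2_0 eqxx; case.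
move=> /eqP; rewrite addrC addr_eq0 => /eqP c1a; exists (- c0 / c1).
by rewrite mulrC -scalerA scaleNr -c1a scalerA mulVf // scale1r.
Qed.

Lemma deg2_mul_conj a al be : mul a a = al *: a + be *: one ->
  mul a (a - al *: one) = be *: one /\ mul (a - al *: one) a = be *: one.
Proof.
move=> a2; rewrite bmulBr // bmulBl // bmulZr // bmulZl // mul1x mulx1 a2.
by rewrite addrAC subrr add0r.
Qed.

Lemma quadratic_vN_finite : quadratic mul one -> vN_finite mul one.
Proof.
move=> mul_quad a b ab1; have a_neq0 := rinv_neq0 ab1.
have [[k a_scalar]|[al [be a2]]] := quadratic_scalar_or_deg2 a mul_quad.
  by move: ab1; rewrite a_scalar; apply: scalar_rinv_comm.
have [a_conj conj_a] := deg2_mul_conj a2.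
have [be0|be_neq0] := eqVneq be 0.
  move: a_conj; rewrite be0 scale0r => /mul_nzd [a0|/eqP]; first by rewrite a0 eqxx in a_neq0.
  by rewrite subr_eq0 => /eqP a_scalar; move: ab1; rewrite a_scalar; apply: scalar_rinv_comm.
have -> : b = be^-1 *: (a - al *: one).
  by apply: (nzd_lcancel a_neq0); rewrite ab1 bmulZr // a_conj scalerA mulVf // scale1r.
by rewrite bmulZl // conj_a scalerA mulVf // scale1r.
Qed.

End Unital.

Theorem proposition4p3 (F : fieldType) (V : lmodType F) (mul : V -> V -> V) (one : V) :
  bilinear_mul mul -> is_unit_elt mul one -> no_zero_divisors mul ->
  (flexible mul \/ quadratic mul one) ->
  vN_finite mul one.
Proof.
move=> mul_bilinear one_unit mul_nzd flex_or_quad.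
have [one0|one_neq0] := eqVneq one 0.
  by move=> a b _; rewrite -[mul b a](one_unit _).1 one0 bmul0l.
by case: flex_or_quad => [flex|quad];
  [exact: flexible_vN_finite | exact: quadratic_vN_finite].
Qed.
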